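(* Let $\psi$ be an $n$-dimensional unique sink orientation, and let $v^0, v^1, \dots, v^\rho$ be the sequence of vertices produced by Algorithm 1 started at $v^0$, where $\rho$ is the iteration in which the algorithm terminates. Then $r_\psi(v^0) \supseteq r_\psi(v^1) \supseteq \dots \supseteq r_\psi(v^\rho)$.
   Context: Let $Q^n = 2^{[n]}$ be the vertex set of the $n$-cube, with $u,v$ adjacent iff $|u\oplus v|=1$; faces are $F_{J,v}=\{u : v\oplus u\subseteq J\}$ for $J\subseteq[n]$. A unique sink orientation (USO) is an orientation of the cube's edges such that every nonempty face has a unique sink (vertex with no outgoing edges within the face). The outmap $s_\psi(v)$ is the set of coordinates $j$ such that the edge $\{v,v\oplus\{j\}\}$ is directed away from $v$. The reachmap is $r_\psi(v)=s_\psi(v)\cup\{j : \exists u \text{ reachable from } v \text{ by a directed path with } j\in s_\psi(u)\}$. Algorithm 1: given a starting vertex $v^0$, set $E^0=\emptyset$ and $j=0$; while $s_\psi(v^j)\neq\emptyset$: pick any $b\in s_\psi(v^j)$, let $v^{j+1}$ be the sink of the face $F_{E^j, v^j\oplus\{b\}}$ (computed by the Fibonacci Seesaw algorithm of Szabó and Welzl), set $E^{j+1}=E^j\cup\{b\}$ and $j\leftarrow j+1$. The algorithm terminates at iteration $\rho$ when $s_\psi(v^\rho)=\emptyset$. *)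

(* Vertices of the n-cube Q^n are subsets of [n] = 'I_n. *)
From mathcomp Require Import all_boot.
Set Implicit Arguments. Unset Strict Implicit. Unset Printing Implicit Defensive.

Section Cube.
Variable n : nat.
Notation vert := {set 'I_n}.

Definition symd (u v : vert) : vert := (u :\: v) :|: (v :\: u).

Definition face (J v : vert) : {set vert} := [set u | symd v u \subset J].

(* An orientation is given by its outmap s : s v = set of coordinates j
   such that edge {v, v (+) {j}} is directed away from v.  Consistency:
   each edge gets exactly one direction. *)
Definition is_orientation (s : vert -> vert) : Prop :=
  forall (v : vert) (j : 'I_n), (j \in s v) = (j \notin s (symd v [set j])).

(* u is a sink of the face F_{J,v}: u in the face and no outgoing edge of u
   inside the face (the edges of u inside F_{J,v} are the directions in J). *)
Definition is_sink (s : vert -> vert) (J v u : vert) : bool :=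
  (u \in face J v) && (s u :&: J == set0).

Definition is_USO (s : vert -> vert) : Prop :=
  is_orientation s /\
  forall J v : vert, exists! u : vert, is_sink s J v u.

Definition dedge (s : vert -> vert) : rel vert :=
  fun u w => [exists j, (j \in s u) && (w == symd u [set j])].

Definition reachmap (s : vert -> vert) (v : vert) : vert :=
  s v :|: [set j | [exists u, connect (dedge s) v u && (j \in s u)]].

Definition alg1_run (s : vert -> vert) (vs Es : nat -> vert) (rho : nat) : Prop :=
  Es 0 = set0 /\
  (forall j, j < rho ->
     s (vs j) != set0 /\
     exists2 b, b \in s (vs j) &
       is_sink s (Es j) (symd (vs j) [set b]) (vs j.+1) /\
       Es j.+1 = Es j :|: [set b]) /\
  s (vs rho) = set0.

End Cube.

From mathcomp Require Import all_boot.

(* Every vertex of a face reaches the sink of that face by a directed path.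
   By induction on the dimension: split the face along a direction i into two
   halves.  The vertex u reaches the sink t1 of its own half; if t1 is the sink
   of the whole face we are done, otherwise its only outgoing edge inside the
   face is the i-edge, which leads into the other half, whose sink is the sink
   of the whole face.  Hence v^j -> v^j (+) {b} ~> v^{j+1} is a directed path,
   and the reachmap can only shrink along directed paths. *)

Set Implicit Arguments. Unset Strict Implicit. Unset Printing Implicit Defensive.

Section Faces.
Variable n : nat.
Implicit Types (u v w t J : {set 'I_n}) (i x : 'I_n).

Lemma in_symd u v x : (x \in symd u v) = (x \in u) (+) (x \in v).
Proof. by rewrite !inE; case: (x \in u); case: (x \in v). Qed.

Lemma symd_subset u v J : u \subset J -> v \subset J -> symd u v \subset J.
Proof. by move=> uJ vJ; rewrite subUset !(subset_trans (subsetDl _ _)). Qed.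

Lemma symd_trans u v w : symd (symd u v) (symd v w) = symd u w.
Proof.
by apply/setP=> x; rewrite !in_symd; case: (x \in u); case: (x \in v); case: (x \in w).
Qed.

Lemma symdC u v : symd u v = symd v u.
Proof. by apply/setP=> x; rewrite !in_symd addbC. Qed.

Lemma mem_face J v u : (u \in face J v) = (symd v u \subset J).
Proof. by rewrite inE. Qed.

Lemma face_refl J v : v \in face J v.
Proof.
by rewrite mem_face; apply/subsetP=> x; rewrite in_symd addbb.
Qed.

Lemma face_trans J u v w : u \in face J v -> w \in face J u -> w \in face J v.
Proof. by rewrite !mem_face -(symd_trans v u w); apply: symd_subset. Qed.

Lemma face_sym J u v : u \in face J v -> v \in face J u.
Proof. by rewrite !mem_face symdC. Qed.

Lemma face_subset J J' u v : J' \subset J -> u \in face J' v -> u \in face J v.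
Proof. by rewrite !mem_face => J'J /subset_trans; apply. Qed.

Lemma face0 u v : u \in face set0 v -> u = v.
Proof.
rewrite mem_face subset0 => /eqP/setP d0; apply/setP=> x.
by move: (d0 x); rewrite in_symd inE; case: (x \in u); case: (x \in v).
Qed.

Lemma face_setD1_flip J u t t1 i :
  t \in face J u -> t \notin face (J :\ i) u -> t1 \in face (J :\ i) u ->
  t \in face (J :\ i) (symd t1 [set i]).
Proof.
rewrite !mem_face => /subsetP tJ /subsetPn[y yd yJ'] /subsetP t1J'.
have yi : y = i by move: yJ'; rewrite !inE (tJ y yd) andbT negbK => /eqP.
have uti : (i \in u) (+) (i \in t) by rewrite -in_symd -yi.
have ut1i : (i \in u) = (i \in t1).
  move: (t1J' i); rewrite in_symd setD11.
  by case: (i \in u); case: (i \in t1) => //= /(_ isT).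
apply/subsetP=> x; rewrite in_symd in_symd in_set1.
have [-> | xi] := eqVneq x i; first by rewrite -ut1i addbT addNb uti.
rewrite addbF in_setD1 xi /=; move: (t1J' x) (tJ x); rewrite !in_symd in_setD1 xi /=.
by case: (x \in u); case: (x \in t1); case: (x \in t) => //= h1 h2 _;
  first [exact: h1 | exact: h2].
Qed.

End Faces.

Section Sinks.
Variables (n : nat) (s : {set 'I_n} -> {set 'I_n}).
Implicit Types (u v t J : {set 'I_n}) (i : 'I_n).

Lemma sink_face J v t : is_sink s J v t -> t \in face J v.
Proof. by case/andP. Qed.

Lemma sink_subface J J' v u t :
  is_sink s J v t -> J' \subset J -> t \in face J' u -> is_sink s J' u t.
Proof.
case/andP=> _ /eqP stJ J'J tJ'; rewrite /is_sink tJ' -subset0 -stJ.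
exact: setIS.
Qed.

Lemma sink_setD1 J u t i :
  is_sink s (J :\ i) u t -> i \notin s t -> is_sink s J u t.
Proof.
case/andP=> tJ' /eqP stJ' ist; rewrite /is_sink (face_subset (subsetDl _ _) tJ').
rewrite -subset0 -stJ'; apply/subsetP=> x; rewrite !inE => /andP[sx ->].
by rewrite sx andbT; apply: contraNneq ist => <-.
Qed.

Lemma dedge_flip u i : i \in s u -> dedge s u (symd u [set i]).
Proof. by move=> iu; apply/existsP; exists i; rewrite iu eqxx. Qed.

Lemma mem_reachmap v x :
  (x \in reachmap s v) = [exists u, connect (dedge s) v u && (x \in s u)].
Proof.
rewrite !inE orb_idl // => xv; apply/existsP; exists v.
by rewrite connect0 xv.
Qed.

Lemma reachmap_connect u v :
  connect (dedge s) u v -> reachmap s v \subset reachmap s u.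
Proof.
move=> uv; apply/subsetP=> x; rewrite !mem_reachmap => /existsP[w /andP[vw xw]].
by apply/existsP; exists w; rewrite (connect_trans uv vw).
Qed.

Hypothesis uso : is_USO s.

Lemma USO_sink_uniq J v t t' : is_sink s J v t -> is_sink s J v t' -> t = t'.
Proof. by case: uso => _ /(_ J v)[t0 [_ t0E]] /t0E <- /t0E. Qed.

Lemma USO_connect_sink_refl J u t : is_sink s J u t -> connect (dedge s) u t.
Proof.
have [k] := ubnP #|J|; elim: k J u t => // k IH J u t.
have [-> _ /sink_face/face0 -> // | [i iJ]] := set_0Vmem J.
rewrite ltnS (cardsD1 i) iJ add1n => J'k tsink.
have [t1 [t1sink _]] := uso.2 (J :\ i) u.
apply: connect_trans (IH _ _ _ J'k t1sink) _.
have J'J : J :\ i \subset J by exact: subsetDl.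
have [tJ' | tJ'] := boolP (t \in face (J :\ i) u).
  by rewrite (USO_sink_uniq t1sink (sink_subface tsink J'J tJ')) connect0.
have it1 : i \in s t1.
  apply: contraNT tJ' => it1; rewrite (USO_sink_uniq tsink (sink_setD1 t1sink it1)).
  exact: sink_face t1sink.
apply: connect_trans (connect1 (dedge_flip it1)) (IH _ _ _ J'k _).
apply: (sink_subface tsink J'J).
by apply: face_setD1_flip (sink_face tsink) tJ' (sink_face t1sink).
Qed.

Lemma USO_connect_sink J v u t :
  is_sink s J v t -> u \in face J v -> connect (dedge s) u t.
Proof.
move=> tsink uJv; apply: USO_connect_sink_refl.
exact: sink_subface tsink (subxx J) (face_trans (face_sym uJv) (sink_face tsink)).
Qed.

End Sinks.

Theorem lemma17 (n : nat) (s : {set 'I_n} -> {set 'I_n})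
    (vs Es : nat -> {set 'I_n}) (rho : nat) :
  is_USO s -> alg1_run s vs Es rho ->
  forall j, j < rho -> reachmap s (vs j.+1) \subset reachmap s (vs j).
Proof.
move=> uso [_ [run _]] j jrho.
have [_ [b bs [next_sink _]]] := run j jrho.
apply: reachmap_connect.
apply: connect_trans (connect1 (dedge_flip bs)) _.
exact: (USO_connect_sink uso next_sink (face_refl _ _)).
Qed.
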